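(* Let $n\ge2$, let $\mathcal{P}$ be a distribution on $\mathcal{Z}$, let $\mathcal{A}:\mathcal{Z}^{n-1}\to\mathcal{W}\subseteq\mathbb{R}^K$ be a deterministic algorithm and let $\ell:\mathcal{W}\times\mathcal{Z}\to[0,1]$ be a loss that is $L$-Lipschitz in the weights, i.e. $|\ell(w,z)-\ell(w',z)|\le L\|w-w'\|$ for all $w,w',z$ (with $\ell$ extended to all of $\mathbb{R}^K$ with the same properties so that noisy weights can be evaluated). If $\mathcal{A}$ has $\epsilon$-weight stability relative to a positive definite matrix $\Sigma$, then \[ \mathrm{gen}(\mathcal{A})\le\sqrt{4c_n\,\epsilon\, L\sqrt{\mathrm{tr}(\Sigma)}},\qquad c_n=\frac{n}{n-1}. \]
   Context: $\mathcal{A}$ has $\epsilon$-weight stability relative to $\Sigma$ if for all $z^{n-1},\hat z^{n-1}\in\mathcal{Z}^{n-1}$ differing in at most one entry, $a=\mathcal{A}(z^{n-1})-\mathcal{A}(\hat z^{n-1})$ satisfies $a^T\Sigma^{-1}a\le\epsilon^2$. True loss $\mathcal{L}(w)=\mathbb{E}_{Z'\sim\mathcal{P}}\ell(w,Z')$, empirical loss $\widehat{\mathcal{L}}(w,z^m)=\frac1m\sum_i\ell(w,z_i)$, and $\mathrm{gen}(\mathcal{A})=|\mathbb{E}_{Z^{n-1}\sim\mathcal{P}^{n-1}}[\mathcal{L}(\mathcal{A}(Z^{n-1}))-\widehat{\mathcal{L}}(\mathcal{A}(Z^{n-1}),Z^{n-1})]|$.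
   Formalization: For every v ∈ ℝᴷ the map (zⁿ⁻¹, z) ↦ ℓ(𝒜(zⁿ⁻¹) + v, z) on 𝒵ⁿ⁻¹ × 𝒵 is also assumed measurable, and ε ≥ 0 is assumed as well. Apart from conventions, each condition added here is assumed in the paper as well or is needed for the statement above to hold. *)

From HB Require Import structures.
From mathcomp Require Import all_boot all_order all_algebra.
From mathcomp Require Import all_classical all_reals all_analysis.
Set Implicit Arguments. Unset Strict Implicit. Unset Printing Implicit Defensive.
Import Order.TTheory GRing.Theory Num.Theory.
Local Open Scope classical_set_scope.
Local Open Scope ring_scope.

Definition eucl_norm (R : realType) (K : nat) (w : 'rV[R]_K) : R :=
  Num.sqrt (\sum_(i < K) w 0 i ^+ 2).

Definition posdef (R : realType) (K : nat) (S : 'M[R]_K) : Prop :=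
  S^T = S /\ forall x : 'rV[R]_K, x != 0 -> 0 < (x *m S *m x^T) 0 0.

Definition differ_at_most_one (T : Type) (m : nat) (z zh : m.-tuple T) : Prop :=
  exists i : 'I_m, forall j : 'I_m, j != i -> tnth z j = tnth zh j.

(* epsilon-weight stability of A relative to Sigma:  a^T Sigma^-1 a <= eps^2
   (a written as a row vector, so a^T Sigma^-1 a = (a *m Sigma^-1 *m a^T) 0 0). *)
Definition weight_stable (R : realType) (T : Type) (m K : nat)
    (A : m.-tuple T -> 'rV[R]_K) (S : 'M[R]_K) (eps : R) : Prop :=
  forall z zh : m.-tuple T, differ_at_most_one z zh ->
    let a := A z - A zh in (a *m invmx S *m a^T) 0 0 <= eps ^+ 2.

(* Pm is the product probability P^{(x) m} on m.-tuple Z: it is characterized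
   (pi-lambda) by its values on measurable rectangles. *)
Definition is_product_prob (d : measure_display) (Z : measurableType d)
    (R : realType) (m : nat) (P : probability Z R)
    (Pm : probability (m.-tuple Z) R) : Prop :=
  forall B : 'I_m -> set Z, (forall i, measurable (B i)) ->
    Pm [set x | forall i, B i (tnth x i)] = (\prod_(i < m) P (B i))%E.

Definition true_loss (d : measure_display) (Z : measurableType d)
    (R : realType) (K : nat) (P : probability Z R)
    (loss : 'rV[R]_K -> Z -> R) (w : 'rV[R]_K) : R :=
  Rintegral P setT (loss w).

Definition emp_loss (R : realType) (T : Type) (K m : nat)
    (loss : 'rV[R]_K -> T -> R) (w : 'rV[R]_K) (z : m.-tuple T) : R :=
  (m%:R)^-1 * \sum_(i < m) loss w (tnth z i).

Definition gen (d : measure_display) (Z : measurableType d)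
    (R : realType) (K m : nat) (P : probability Z R)
    (Pm : probability (m.-tuple Z) R)
    (loss : 'rV[R]_K -> Z -> R) (A : m.-tuple Z -> 'rV[R]_K) : R :=
  `| Rintegral Pm setT
        (fun x => true_loss P loss (A x) - emp_loss loss (A x) x) |.

(* Resampling: replacing the i-th training point by an independent fresh point
   z leaves the law P^(n-1) (x) P of (x, z) invariant, so the expected
   generalization gap is the average over i of
   E[loss(A x, z) - loss(A x^(i<-z), z)].  Each term is at most
   L |A x - A x^(i<-z)|, and Cauchy-Schwarz for the inner product defined by
   Sigma gives |a|^2 <= (a^T Sigma^-1 a) tr Sigma <= eps^2 tr Sigma.  Hence
   gen(A) <= min(1, L eps sqrt(tr Sigma)), which is below
   sqrt(4 c_n eps L sqrt(tr Sigma)) because c_n >= 1. *)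

From HB Require Import structures.
From mathcomp Require Import all_boot all_order all_algebra.
From mathcomp Require Import all_classical all_reals all_analysis.
From mathcomp Require Import measurable_realfun ring lra.
Import Order.TTheory GRing.Theory Num.Theory.
Local Open Scope classical_set_scope.
Local Open Scope ring_scope.

Definition mxform {R : pzRingType} {K : nat} (S : 'M[R]_K) (x y : 'rV[R]_K) : R :=
  (x *m S *m y^T) 0 0.

Section PosdefForm.
Variables (R : realType) (K : nat) (S : 'M[R]_K).
Hypothesis posS : posdef S.

Lemma posdef_form_ge0 x : 0 <= mxform S x x.
Proof.
have [->|x0] := eqVneq x 0; first by rewrite /mxform !mul0mx mxE.
exact/ltW/posS.2.
Qed.

Lemma posdef_form_sym x y : mxform S x y = mxform S y x.
Proof.
rewrite /mxform; transitivity ((x *m S *m y^T)^T 0 0); first by rewrite [RHS]mxE.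
by rewrite !trmx_mul trmxK posS.1 mulmxA.
Qed.

Lemma posdef_unitmx : S \in unitmx.
Proof.
rewrite -row_free_unit; apply: inj_row_free => v vS0.
apply/eqP; apply: contraT => v0.
by have := posS.2 v v0; rewrite vS0 mul0mx mxE ltxx.
Qed.

Lemma mxform_delta_r x k : mxform S x (delta_mx 0 k) = (x *m S) 0 k.
Proof. by rewrite /mxform trmx_delta -colE mxE. Qed.

Lemma mxform_delta k : mxform S (delta_mx 0 k) (delta_mx 0 k) = S k k.
Proof. by rewrite mxform_delta_r -rowE mxE. Qed.

Lemma mxformZB x y s :
  mxform S (s *: x - y) (s *: x - y) =
  s ^+ 2 * mxform S x x - 2 * s * mxform S x y + mxform S y y.
Proof.
have yx := posdef_form_sym y x; rewrite /mxform in yx *.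
rewrite linearB linearZ /= !mulmxBl !mulmxBr -!scalemxAl -!scalemxAr !mxE.
rewrite !mxE in yx; rewrite yx; ring.
Qed.

Lemma posdef_cauchy_schwarz x y :
  mxform S x y ^+ 2 <= mxform S x x * mxform S y y.
Proof.
have [->|x0] := eqVneq x 0; first by rewrite /mxform !mul0mx !mxE expr0n !mul0r.
have qx_gt0 : 0 < mxform S x x := posS.2 x x0.
have := posdef_form_ge0 (mxform S x y / mxform S x x *: x - y).
rewrite mxformZB.
move: qx_gt0; set c := mxform S x x; set b := mxform S x y => c_gt0.
have -> : (b / c) ^+ 2 * c - 2 * (b / c) * b + mxform S y y =
          (c * mxform S y y - b ^+ 2) / c by field; rewrite lt0r_neq0.
by rewrite pmulr_lge0 ?invr_gt0 // subr_ge0.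
Qed.

(* With b := a S^-1, a_k is the S-inner product of b with the k-th basis
   vector, whose squared S-norm is S_kk; now apply Cauchy-Schwarz. *)
Lemma sqr_coef_le_invform (a : 'rV[R]_K) k :
  a 0 k ^+ 2 <= mxform (invmx S) a a * S k k.
Proof.
set b := a *m invmx S.
have ab : a = b *m S by rewrite /b -mulmxA mulVmx ?mulmx1 ?posdef_unitmx.
have -> : mxform (invmx S) a a = mxform S b b.
  rewrite /mxform /b trmx_mul trmx_inv posS.1.
  by rewrite -(mulmxA a (invmx S) S) mulVmx ?posdef_unitmx // mulmx1 mulmxA.
by rewrite -mxform_delta {1}ab -mxform_delta_r posdef_cauchy_schwarz.
Qed.

Lemma eucl_norm_le_invform (a : 'rV[R]_K) eps : 0 <= eps ->
  mxform (invmx S) a a <= eps ^+ 2 -> eucl_norm a <= eps * Num.sqrt (\tr S).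
Proof.
move=> eps_ge0 a_le; rewrite /eucl_norm.
have : \sum_(k < K) a 0 k ^+ 2 <= eps ^+ 2 * \tr S.
  rewrite /mxtrace mulr_sumr; apply: ler_sum => k _.
  apply: le_trans (sqr_coef_le_invform a k) _.
  by apply: ler_wpM2r a_le; rewrite -mxform_delta posdef_form_ge0.
move/ler_wsqrtr/le_trans; apply.
by rewrite sqrtrM ?sqr_ge0 // sqrtr_sqr ger0_norm.
Qed.

End PosdefForm.

Lemma weight_stable_eucl_norm (R : realType) (T : Type) (m K : nat)
    (A : m.-tuple T -> 'rV[R]_K) (S : 'M[R]_K) eps z zh :
  posdef S -> 0 <= eps -> weight_stable A S eps -> differ_at_most_one z zh ->
  eucl_norm (A z - A zh) <= eps * Num.sqrt (\tr S).
Proof.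
by move=> posS eps_ge0 stabA zzh; apply: eucl_norm_le_invform => //; apply: stabA.
Qed.

Section BoundedIntegrals.
Context {R : realType} {d : measure_display} {T : measurableType d}.
Variable mu : probability T R.

Lemma bounded_integrable {f : T -> R} (c : R) : measurable_fun setT f ->
  (forall x, `|f x| <= c) -> mu.-integrable setT (EFin \o f).
Proof.
move=> mf f_le; have mu_fin : (mu setT < +oo)%E by rewrite probability_setT ltry.
apply: measurable_bounded_integrable => //.
exists c; split; first by rewrite num_real.
by move=> M cM x _; apply: le_trans (f_le x) (ltW cM).
Qed.

Lemma Rintegral_prob_cst c : Rintegral mu setT (fun=> c) = c.
Proof.
rewrite Rintegral_cst //; change (c * fine (mu setT) = c).
by rewrite probability_setT mulr1.
Qed.

Lemma normr_Rintegral_le (f : T -> R) (c : R) : measurable_fun setT f ->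
  (forall x, `|f x| <= c) -> `|Rintegral mu setT f| <= c.
Proof.
move=> mf f_le.
apply: le_trans (le_normr_Rintegral _ _) _ => //; first exact: bounded_integrable c mf f_le.
rewrite -[leRHS](Rintegral_prob_cst c); apply: le_Rintegral => //.
- by apply: (bounded_integrable c); [exact: measurableT_comp|move=> x; rewrite normr_id].
- by apply: (bounded_integrable `|c|) => // x.
Qed.

Lemma Rintegral_sum_bounded (I : eqType) (s : seq I) (f : I -> T -> R) (c : R) :
  (forall j, measurable_fun setT (f j)) -> (forall j x, `|f j x| <= c) ->
  Rintegral mu setT (fun x => \sum_(j <- s) f j x) =
  \sum_(j <- s) Rintegral mu setT (f j).
Proof.
move=> mf f_le; elim: s => [|j s IHs].
  by under eq_Rintegral do rewrite big_nil; rewrite big_nil Rintegral_prob_cst.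
under eq_Rintegral do rewrite big_cons.
rewrite big_cons RintegralD ?IHs //; first exact: bounded_integrable c (mf j) (f_le j).
apply: (bounded_integrable ((size s)%:R * c)); first exact: measurable_sum.
move=> x; apply: le_trans (ler_norm_sum _ _ _) _.
by rewrite -sum1_size natr_sum mulr_suml; apply: ler_sum => k _; rewrite mul1r.
Qed.

End BoundedIntegrals.

Lemma fubini_Rintegral {R : realType} {d1 d2 : measure_display}
    {T1 : measurableType d1} {T2 : measurableType d2}
    (mu1 : probability T1 R) (mu2 : probability T2 R) (f : T1 * T2 -> R) (c : R) :
  measurable_fun setT f -> (forall p, `|f p| <= c) ->
  Rintegral mu1 setT (fun x => Rintegral mu2 setT (fun y => f (x, y))) =
  Rintegral (mu1 \x mu2)%E setT f.
Proof.
move=> mf f_le.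
have intf := bounded_integrable (mu1 \x mu2)%E c mf f_le.
rewrite /Rintegral -(integral12_prod_meas1 intf); congr fine.
apply: eq_integral => x _.
have intfx : mu2.-integrable setT (EFin \o (fun y => f (x, y))).
  by apply: (bounded_integrable mu2 c); [exact: measurable_fun_pair2|move=> y; exact: f_le].
by rewrite /fubini_F fineK // integrable_fin_num.
Qed.

Definition tupd {T : Type} {m : nat} (x : m.-tuple T) (i : 'I_m) (z : T) :
  m.-tuple T := [tuple if j == i then z else tnth x j | j < m].

Lemma tnth_tupd T m (x : m.-tuple T) i z j :
  tnth (tupd x i z) j = if j == i then z else tnth x j.
Proof. by rewrite tnth_mktuple. Qed.

Lemma tupd_tnth_tupd T m (x : m.-tuple T) i z : tupd (tupd x i z) i (tnth x i) = x.
Proof. by apply: eq_from_tnth => j; rewrite !tnth_tupd; case: eqP => // ->. Qed.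

Lemma differ_at_most_one_tupd T m (x : m.-tuple T) i z :
  differ_at_most_one x (tupd x i z).
Proof. by exists i => j ji; rewrite tnth_tupd (negbTE ji). Qed.

Section Resample.
Context {R : realType} {d : measure_display} {Z : measurableType d} {m : nat}.
Context {P : probability Z R} {Pn : probability (m.-tuple Z) R}.
Hypothesis prodPn : is_product_prob P Pn.

Lemma measurable_tupd i :
  measurable_fun setT (fun p : m.-tuple Z * Z => tupd p.1 i p.2).
Proof.
apply/measurable_fun_tnthP => j.
have -> : (fun x => tnth x j) \o (fun p : m.-tuple Z * Z => tupd p.1 i p.2) =
    if j == i then snd else (fun x => tnth x j) \o fst.
  by apply/funext => p /=; rewrite tnth_tupd; case: (j == i).
case: (j == i); first exact: measurable_snd.
exact: measurableT_comp (measurable_tnth j) measurable_fst.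
Qed.

Definition resample (i : 'I_m) (p : m.-tuple Z * Z) : m.-tuple Z * Z :=
  (tupd p.1 i p.2, tnth p.1 i).

Lemma measurable_resample i : measurable_fun setT (resample i).
Proof.
apply: measurable_fun_pair; first exact: measurable_tupd.
exact: measurableT_comp (measurable_tnth i) measurable_fst.
Qed.

Definition tbox (B : 'I_m -> set Z) : set (m.-tuple Z) :=
  [set x | forall j, B j (tnth x j)].

Lemma measurable_tbox B : (forall j, measurable (B j)) -> measurable (tbox B).
Proof.
move=> mB; have -> : tbox B = \bigcap_(j in [set: 'I_m]) ((fun x => tnth x j) @^-1` B j).
  by apply/seteqP; split => x /= Bx j; [move=> _|]; exact: (Bx j).
apply: fin_bigcap_measurable; first exact: finite_finset.
by move=> j _; rewrite -[X in measurable X]setTI; exact: measurable_tnth.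
Qed.

Definition tbox_rectangles : set (set (m.-tuple Z * Z)) :=
  [set tbox B `*` C | B in [set B | forall j, measurable (B j)] & C in measurable].

Lemma tbox_rectangles_measurable : tbox_rectangles `<=` measurable.
Proof. by move=> _ [B mB [C mC <-]]; apply: measurableX => //; exact: measurable_tbox. Qed.

Lemma setI_closed_tbox_rectangles : setI_closed tbox_rectangles.
Proof.
move=> _ _ [B mB [C mC <-]] [B' mB' [C' mC' <-]].
exists (fun j => B j `&` B' j); first by move=> j; exact: measurableI.
exists (C `&` C'); first exact: measurableI.
rewrite -setXI; congr (_ `*` _); apply/seteqP; split => x /=.
  by move=> BB'x; split => j; have [] := BB'x j.
by move=> [Bx B'x] j; split.
Qed.

Lemma tbox_rectanglesT : tbox_rectangles setT.
Proof.
exists (fun=> setT) => //; exists setT => //.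
by rewrite -setXTT; congr (_ `*` _); apply/seteqP; split.
Qed.

Lemma rectangle_section_sigma_algebra (C : set Z) : measurable C ->
  sigma_algebra setT [set A : set (m.-tuple Z) | <<s tbox_rectangles >> (A `*` C)].
Proof.
move=> mC; have [sG0 _ sGU] := smallest_sigma_algebra setT tbox_rectangles.
split => /=; first by rewrite set0X.
- move=> A sGAC.
  have -> : ([set: m.-tuple Z] `\` A) `*` C = (setT `*` C) `\` (A `*` C).
    apply/seteqP; split => -[x z] /=; first by move=> [[_ nAx] Cz]; split => // -[].
    by move=> [[_ Cz] nAxz]; split => //; split => // Ax; apply: nAxz.
  apply: (@measurableD _ (g_sigma_algebraType tbox_rectangles)) => //.
  apply: sub_sigma_algebra; exists (fun=> setT) => //; exists C => //.
  by congr (_ `*` _); apply/seteqP; split.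
- by move=> F sGF; rewrite setX_bigcupl; exact: sGU.
Qed.

Lemma measurable_prod_tbox_rectangles :
  @measurable _ (m.-tuple Z * Z)%type = <<s tbox_rectangles >>.
Proof.
rewrite eqEsubset; split; last first.
  apply: smallest_sub; [exact: sigma_algebra_measurable|exact: tbox_rectangles_measurable].
rewrite measurable_prod_measurableType; apply: smallest_sub.
  exact: smallest_sigma_algebra.
move=> _ [A mA [C mC <-]].
suff : measurable `<=` [set A | <<s tbox_rectangles >> (A `*` C)] by apply.
apply: smallest_sub; first exact: rectangle_section_sigma_algebra.
move=> X; rewrite -bigcup_seq => -[j _ [Bj mBj <-]] /=.
apply: sub_sigma_algebra; exists (fun k => if k == j then Bj else setT).
  by move=> k; case: (k == j).
exists C => //; congr (_ `*` _); apply/seteqP; split => x /=.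
  by move=> Bx; split => //; have := Bx j; rewrite eqxx.
by move=> [_ Bjx] k; case: eqP => // ->.
Qed.

Variable i : 'I_m.

Lemma resample_preimage_rect B C :
  resample i @^-1` (tbox B `*` C) =
  tbox (fun j => if j == i then C else B j) `*` B i.
Proof.
apply/seteqP; split => -[x z] /= [Bx Bz]; split.
- move=> j; case: eqP => [->|/eqP ji] //.
  by have := Bx j; rewrite tnth_tupd (negbTE ji).
- by have := Bx i; rewrite tnth_tupd eqxx.
- move=> j; rewrite tnth_tupd; case: eqP => [->|/eqP ji] //.
  by have := Bx j; rewrite (negbTE ji).
- by have := Bx i; rewrite eqxx.
Qed.

Lemma pushforward_resample_rect X : tbox_rectangles X ->
  pushforward (Pn \x P)%E (resample i) X = (Pn \x P)%E X.
Proof.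
move=> [B mB [C mC <-]]; set B' := fun j => if j == i then C else B j.
have mB' j : measurable (B' j) by rewrite /B'; case: ifP.
rewrite /pushforward resample_preimage_rect -/B'.
have mtB : measurable (tbox B) by apply: measurable_tbox.
have mtB' : measurable (tbox B') by apply: measurable_tbox.
rewrite !product_measure1E //.
transitivity ((\prod_(j < m) P (B' j)) * P (B i))%E.
  by congr (_ * _)%E; exact: prodPn.
transitivity ((\prod_(j < m) P (B j)) * P C)%E; last first.
  by congr (_ * _)%E; apply/esym/prodPn.
rewrite (bigD1 i) // [in RHS](bigD1 i) //= {1}/B' eqxx.
rewrite (eq_bigr (fun j => P (B j))); last by move=> j /negbTE ji; rewrite /B' ji.
by rewrite muleAC [RHS]muleAC (muleC (P C)).
Qed.

Lemma pushforward_resample X : measurable X ->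
  pushforward (Pn \x P)%E (resample i) X = (Pn \x P)%E X.
Proof.
apply: (measure_unique tbox_rectangles (fun=> setT)).
- exact: measurable_prod_tbox_rectangles.
- exact: setI_closed_tbox_rectangles.
- by move=> _; exact: tbox_rectanglesT.
- by rewrite bigcup_const //; exists 0%N.
- (* the measure structure of the pushforward depends on this proof *)
  exact: measurable_resample.
- by move=> mres A; exact: pushforward_resample_rect.
- move=> mres _; change (pushforward (Pn \x P)%E (resample i) setT < +oo)%E.
  rewrite /pushforward preimage_setT -setXTT product_measure1E //.
  have PnP1 : (Pn setT * P setT = 1)%E by rewrite !probability_setT mule1.
  by rewrite PnP1 ltry.
Qed.

Lemma Rintegral_resample (f : m.-tuple Z * Z -> R) (c : R) :
  measurable_fun setT f -> (forall p, `|f p| <= c) ->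
  Rintegral (Pn \x P)%E setT (f \o resample i) = Rintegral (Pn \x P)%E setT f.
Proof.
move=> mf f_le; rewrite /Rintegral; congr fine.
have mEf : measurable_fun setT (EFin \o f) by exact/measurable_EFinP.
have intf : (Pn \x P)%E.-integrable (resample i @^-1` setT) ((EFin \o f) \o resample i).
  apply: (bounded_integrable _ c) => //.
  exact: measurableT_comp mf (measurable_resample i).
have := integral_pushforward (measurable_resample i) mEf intf measurableT.
rewrite preimage_setT => <-.
apply: eq_measure_integral; first exact: measurable_resample.
by move=> mres A mA _; exact: pushforward_resample.
Qed.

End Resample.

Lemma normrB_le1 (R : realDomainType) (a b : R) :
  0 <= a <= 1 -> 0 <= b <= 1 -> `|a - b| <= 1.
Proof. by move=> /andP[? ?] /andP[? ?]; rewrite ler_norml; apply/andP; split; lra. Qed.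

Section Symmetrization.
Context {R : realType} {d : measure_display} {Z : measurableType d} {m : nat}.
Context {P : probability Z R} {Pn : probability (m.-tuple Z) R}.
Hypothesis prodPn : is_product_prob P Pn.
Context {F : m.-tuple Z * Z -> R}.
Hypothesis mF : measurable_fun setT F.
Hypothesis F01 : forall p, 0 <= F p <= 1.

Definition gen_gap (x : m.-tuple Z) : R :=
  Rintegral P setT (fun z => F (x, z)) - m%:R^-1 * \sum_(i < m) F (x, tnth x i).

Let normF_le1 p : `|F p| <= 1.
Proof. by have /andP[F_ge0 F_le1] := F01 p; rewrite ger0_norm. Qed.

Let normFB_le1 p q : `|F p - F q| <= 1.
Proof. exact: normrB_le1. Qed.

Let measurable_F_tnth i :
  measurable_fun setT (fun p : m.-tuple Z * Z => F (p.1, tnth p.1 i)).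
Proof.
apply: measurableT_comp mF _; apply: measurable_fun_pair; first exact: measurable_fst.
exact: measurableT_comp (measurable_tnth i) measurable_fst.
Qed.

Let measurable_F_tupd i :
  measurable_fun setT (fun p : m.-tuple Z * Z => F (tupd p.1 i p.2, p.2)).
Proof.
apply: measurableT_comp mF _; apply: measurable_fun_pair; last exact: measurable_snd.
exact: measurable_tupd.
Qed.

Lemma Rintegral_F_tnth_tupd i :
  Rintegral (Pn \x P)%E setT (fun p => F (p.1, tnth p.1 i)) =
  Rintegral (Pn \x P)%E setT (fun p => F (tupd p.1 i p.2, p.2)).
Proof.
rewrite -(Rintegral_resample prodPn i _ 1 (measurable_F_tupd i)) //.
by apply: eq_Rintegral => -[x z] _ /=; rewrite tupd_tnth_tupd.
Qed.

Lemma Rintegral_gen_gap : (0 < m)%N ->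
  Rintegral Pn setT gen_gap =
  m%:R^-1 * \sum_(i < m) Rintegral (Pn \x P)%E setT
                           (fun p => F p - F (tupd p.1 i p.2, p.2)).
Proof.
move=> m_gt0; have m_neq0 : m%:R != 0 :> R by rewrite pnatr_eq0 -lt0n.
pose D i p := F p - F (p.1, tnth p.1 i).
have mD i : measurable_fun setT (D i) by exact: measurable_funB.
have DE p : m%:R^-1 * \sum_(i < m) D i p =
            F p - m%:R^-1 * \sum_(i < m) F (p.1, tnth p.1 i).
  by rewrite /D sumrB sumr_const card_ord mulrBr -[F p *+ m]mulr_natr mulrCA mulVf // mulr1.
have msumD : measurable_fun setT (fun p => \sum_(i < m) D i p).
  exact: measurable_sum.
have sumD_le p : `|\sum_(i < m) D i p| <= m%:R.
  have -> : m%:R = \sum_(i < m) (1 : R) by rewrite sumr_const card_ord.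
  apply: le_trans (ler_norm_sum _ _ _) _.
  by apply: ler_sum => i _; exact: normFB_le1.
have mavgD : measurable_fun setT (fun p => m%:R^-1 * \sum_(i < m) D i p).
  exact: measurable_funM.
have avgD_le1 p : `|m%:R^-1 * \sum_(i < m) D i p| <= 1.
  by rewrite normrM ger0_norm ?invr_ge0 ?ler0n // ler_pdivrMl ?ltr0n // mulr1.
have gapE x : gen_gap x =
    Rintegral P setT (fun z => m%:R^-1 * \sum_(i < m) D i (x, z)).
  under eq_Rintegral do rewrite DE /=.
  rewrite RintegralB ?Rintegral_prob_cst //.
  - apply: (bounded_integrable P 1) => [|z]; last exact: normF_le1.
    exact: measurable_fun_pair2.
  - by apply: (bounded_integrable P `|m%:R^-1 * \sum_(i < m) F (x, tnth x i)|).
rewrite (eq_Rintegral _ (fun x _ => gapE x)) (fubini_Rintegral _ _ _ 1 mavgD avgD_le1).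
rewrite RintegralZl //; last exact: bounded_integrable _ _ msumD sumD_le.
rewrite (Rintegral_sum_bounded _ _ _ _ 1 mD) => [|i p]; last exact: normFB_le1.
congr (_ * _); apply: eq_bigr => i _.
have intF := bounded_integrable (Pn \x P)%E 1 mF normF_le1.
have intF_tnth := bounded_integrable (Pn \x P)%E 1 (measurable_F_tnth i) (fun=> normF_le1 _).
have intF_tupd := bounded_integrable (Pn \x P)%E 1 (measurable_F_tupd i) (fun=> normF_le1 _).
by rewrite !RintegralB ?Rintegral_F_tnth_tupd.
Qed.

Lemma normr_Rintegral_gen_gap_le (B : R) : (0 < m)%N ->
  (forall p i, `|F p - F (tupd p.1 i p.2, p.2)| <= B) ->
  `|Rintegral Pn setT gen_gap| <= B.
Proof.
move=> m_gt0 FB; rewrite Rintegral_gen_gap // normrM.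
rewrite ger0_norm ?invr_ge0 ?ler0n // ler_pdivrMl ?ltr0n //.
have -> : m%:R * B = \sum_(i < m) B by rewrite sumr_const card_ord mulr_natl.
apply: le_trans (ler_norm_sum _ _ _) _; apply: ler_sum => i _.
by apply: normr_Rintegral_le => //; exact: measurable_funB.
Qed.

End Symmetrization.

Lemma le_sqrt_of_le_min1 (R : rcfType) (y b c : R) :
  0 <= y -> y <= 1 -> y <= b -> 1 <= c -> y <= Num.sqrt (4 * c * b).
Proof.
move=> y_ge0 y_le1 y_leb c_ge1.
rewrite -(ger0_norm y_ge0) -sqrtr_sqr; apply: ler_wsqrtr; nra.
Qed.

Theorem theorem4 (R : realType) (d : measure_display) (Z : measurableType d)
  (n K : nat) (hn : (2 <= n)%N)
  (P : probability Z R) (Pn : probability ((n.-1).-tuple Z) R)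
  (hPn : is_product_prob P Pn)
  (A : (n.-1).-tuple Z -> 'rV[R]_K)
  (loss : 'rV[R]_K -> Z -> R)
  (hloss01 : forall w z, 0 <= loss w z <= 1)
  (L : R)
  (hLip : forall w w' z, `|loss w z - loss w' z| <= L * eucl_norm (w - w'))
  (hmeas : forall v : 'rV[R]_K,
      measurable_fun [set: (n.-1).-tuple Z * Z] (fun p => loss (A p.1 + v) p.2))
  (Sigma : 'M[R]_K) (hSigma : posdef Sigma)
  (eps : R) (heps : 0 <= eps)
  (hstab : weight_stable A Sigma eps) :
  gen P Pn loss A <=
    Num.sqrt (4 * (n%:R / (n.-1)%:R) * eps * L * Num.sqrt (\tr Sigma)).
Proof.
have m_gt0 : (0 < n.-1)%N by rewrite -subn1 subn_gt0.
pose F p := loss (A p.1) p.2.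
have mF : measurable_fun setT F.
  by have := hmeas 0; under eq_fun do rewrite addr0.
have F01 p : 0 <= F p <= 1 := hloss01 _ _.
have gen_le := normr_Rintegral_gen_gap_le hPn mF F01 _ m_gt0.
have gen_ge0 : 0 <= gen P Pn loss A by exact: normr_ge0.
have dist_le p i : eucl_norm (A p.1 - A (tupd p.1 i p.2)) <= eps * Num.sqrt (\tr Sigma).
  exact/weight_stable_eucl_norm/differ_at_most_one_tupd.
have [L_ge0|L_lt0] := leP 0 L; last first.
  apply: le_trans (sqrtr_ge0 _); apply: gen_le => p i.
  apply: le_trans (hLip _ _ _) _.
  by apply: mulr_le0_ge0; [exact: ltW|exact: sqrtr_ge0].
set c := n%:R / (n.-1)%:R; have c_ge1 : 1 <= c.
  by rewrite ler_pdivlMr ?ltr0n // mul1r ler_nat leq_pred.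
rewrite (_ : 4 * c * eps * L * _ = 4 * c * (L * (eps * Num.sqrt (\tr Sigma)))); last by ring.
apply: le_sqrt_of_le_min1 gen_ge0 _ _ c_ge1.
- by apply: gen_le => p i; exact: normrB_le1.
- apply: gen_le => p i; apply: le_trans (hLip _ _ _) _.
  by apply: ler_wpM2l => //; exact: dist_le.
Qed.
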